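(* Let $P(\mathbf{x})$ be set-multilinear with respect to $\mathbf{x}=\mathbf{x}_1\sqcup\cdots\sqcup\mathbf{x}_r$, and let $\mathbf{y}=\mathbf{x}_1\cup\cdots\cup\mathbf{x}_k$ and $\mathbf{z}=\mathbf{x}\setminus\mathbf{y}$. If the dimension of projected shifted partial derivatives is taken with respect to derivatives by set-multilinear monomials in $\mathbf{y}$ only, then for every $\ell$, $\Gamma^{\mathrm{PSPD}}_{k,\ell}(P)\le\Gamma^{\mathrm{SED}}_{k,\ell}(P)$.
   Context: A polynomial is set-multilinear with respect to $\mathbf{x}=\mathbf{x}_1\sqcup\cdots\sqcup\mathbf{x}_r$ if every monomial contains exactly one variable from each part. Let $|\mathbf{y}|=n_y$, $|\mathbf{z}|=n_z$, order variables with $\mathbf{y}$ first, and let $S\subseteq\{0,1\}^{n_y+n_z}$ be the set of strings that are zero on the $\mathbf{y}$ coordinates. For a polynomial $f$ and set $T$ of points, $\mathrm{Eval}_T(f)$ is the vector of values of $f$ on $T$. $\mathbf{z}^{=\ell}$ is the set of monomials of degree exactly $\ell$ in $\mathbf{z}$. Here $\Gamma^{\mathrm{PSPD}}_{k,\ell}(P)=\dim\mathrm{Span}\{\mathrm{Eval}_S(m\cdot \partial P/\partial\mathbf{y}^{\mathbf{e}}) : m\in\mathbf{z}^{=\ell},\ \mathbf{y}^{\mathbf{e}}$ a degree-$k$ monomial in $\mathbf{y}$ that is set-multilinear with respect to $\mathbf{x}_1\sqcup\cdots\sqcup\mathbf{x}_k\}$. The shifted evaluation dimension is $\Gamma^{\mathrm{SED}}_{k,\ell}(P)=\dim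 \mathrm{Span}\{\mathrm{Eval}_{\{0,1\}^{n_z}}(m\cdot P(\mathbf{a},\mathbf{z})) : m\in\mathbf{z}^{=\ell},\ \mathbf{a}\in\{0,1\}^{n_y}$ with at most $k$ ones$\}$. *)

From HB Require Import structures.
From mathcomp Require Import all_boot all_order all_algebra.
From mathcomp Require Import mpoly.

Set Implicit Arguments.
Unset Strict Implicit.
Unset Printing Implicit Defensive.

Import Order.TTheory GRing.Theory.
Local Open Scope ring_scope.

(* Variables are indexed by 'I_n; the partition x = x_1 ⊔ ... ⊔ x_r is given
   by [part : 'I_n -> 'I_r] (variable i lies in block x_(part i + 1)).
   y = x_1 ∪ ... ∪ x_k  is the set of variables with [part i < k],
   z = x \ y the others. *)

Definition is_y (n r k : nat) (part : 'I_n -> 'I_r) (i : 'I_n) : bool :=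
  (part i < k)%N.

Definition set_multilinear (F : fieldType) (n r : nat) (part : 'I_n -> 'I_r)
  (P : {mpoly F[n]}) : Prop :=
  forall m : 'X_{1..n}, m \in msupp P ->
    forall j : 'I_r, (\sum_(i < n | part i == j) m i)%N = 1%N.

(* The set S ⊆ {0,1}^n of boolean points that are zero on the y coordinates.
   It also serves as the index set {0,1}^{n_z} (a z-assignment, extended by
   zeros on y). *)
Definition Spt (n r k : nat) (part : 'I_n -> 'I_r) :=
  {a : {ffun 'I_n -> bool} | [forall i, is_y k part i ==> ~~ a i]}.

Definition EvalS (F : fieldType) (n r k : nat) (part : 'I_n -> 'I_r)
  (f : {mpoly F[n]}) : {ffun Spt k part -> F^o} :=
  [ffun s : Spt k part => f.@[fun i => ((val s) i)%:R]].

Definition z_monom (n r k : nat) (part : 'I_n -> 'I_r) (l : nat)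
  (m : 'X_{1..n}) : bool :=
  [forall i, is_y k part i ==> (m i == 0%N)] && (mdeg m == l).

Definition y_sml_monom (n r k : nat) (part : 'I_n -> 'I_r)
  (e : 'X_{1..n}) : bool :=
  [forall i, ~~ is_y k part i ==> (e i == 0%N)] &&
  [forall j : 'I_r, (j < k)%N ==> ((\sum_(i < n | part i == j) e i)%N == 1%N)].

(* Γ^PSPD_{k,l}(P): monomials of degree l (resp. k) are enumerated inside the
   finite type of monomials of degree < l.+1 (resp. < k.+1). *)
Definition GammaPSPD (F : fieldType) (n r k : nat) (part : 'I_n -> 'I_r)
  (l : nat) (P : {mpoly F[n]}) : nat :=
  \dim (span [seq EvalS k part ('X_[val me.1] * mderivm (val me.2) P)
             | me <- enum {: prod 'X_{1..n < l.+1} 'X_{1..n < k.+1}} &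
               z_monom k part l (val me.1) && y_sml_monom k part (val me.2)]).

Definition subst_y (F : fieldType) (n r k : nat) (part : 'I_n -> 'I_r)
  (a : {ffun 'I_n -> bool}) (P : {mpoly F[n]}) : {mpoly F[n]} :=
  P \mPo [tuple (if is_y k part i then ((a i)%:R)%:MP else 'X_i) | i < n].

(* a ∈ {0,1}^{n_y} (encoded as a point zero on the z coordinates) with at
   most k ones. *)
Definition y_point (n r k : nat) (part : 'I_n -> 'I_r)
  (a : {ffun 'I_n -> bool}) : bool :=
  [forall i, ~~ is_y k part i ==> ~~ a i] && (#|[pred i | a i]| <= k)%N.

Definition GammaSED (F : fieldType) (n r k : nat) (part : 'I_n -> 'I_r)
  (l : nat) (P : {mpoly F[n]}) : nat :=
  \dim (span [seq EvalS k part ('X_[val ma.1] * subst_y k part ma.2 P)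
             | ma <- enum {: prod 'X_{1..n < l.+1} {ffun 'I_n -> bool}} &
               z_monom k part l (val ma.1) && y_point k part ma.2]).

(** Differentiating a set-multilinear y-monomial y^e out of a monomial m of P
    (which has exactly one variable in each block) gives zero unless m agrees
    with e on y, and then leaves no y-variable at all. So evaluating d P/d y^e
    at any point equals evaluating P at the same point with y replaced by the
    indicator of supp e. Hence every generator Eval_S(m * d P/d y^e) of the
    PSPD span is the SED generator Eval_S(m * P(a, z)) with a = supp e, a
    boolean y-point with exactly k ones. *)
From HB Require Import structures.
From mathcomp Require Import all_boot all_order all_algebra.
From mathcomp Require Import mpoly.
From mathcomp Require Import zify.

Set Implicit Arguments.
Unset Strict Implicit.
Unset Printing Implicit Defensive.
Import Order.TTheory GRing.Theory.
Local Open Scope ring_scope.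

Definition supp_point n (e : 'X_{1..n}) : {ffun 'I_n -> bool} :=
  [ffun i => e i != 0%N].

Lemma card_supp_point_le n (e : 'X_{1..n}) : (#|[pred i | supp_point e i]| <= mdeg e)%N.
Proof.
rewrite mdegE -sum1_card big_mkcond /=; apply: leq_sum => i _.
by rewrite inE ffunE; case: (e i).
Qed.

Section Blocks.

Variables (n r k : nat) (part : 'I_n -> 'I_r).

Lemma block_sum1P (f : 'I_n -> nat) j :
  (\sum_(i < n | part i == j) f i)%N = 1%N ->
  exists2 i, part i = j & forall i', part i' = j -> f i' = (i' == i).
Proof.
move=> f1.
have /existsP[i /andP[/eqP pi fi]] : [exists i, (part i == j) && (f i != 0%N)].
  apply: contraPT f1 => /existsPn f0.
  by rewrite big1 // => i pi; move: (f0 i); rewrite pi negbK => /eqP.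
exists i => // i' pi'.
move: f1; rewrite (bigD1 i) ?pi //=.
have [-> | ne] := eqVneq i' i; first by move: fi; lia.
rewrite (bigD1 i') /=; last by rewrite pi' eqxx ne.
by move: fi; lia.
Qed.

Lemma y_sml_monom_block (e : 'X_{1..n}) i :
  y_sml_monom k part e -> is_y k part i ->
  (\sum_(i' < n | part i' == part i) e i')%N = 1%N.
Proof. by case/andP=> _ /forallP eb yi; apply/eqP/(implyP (eb (part i)) yi). Qed.

Lemma y_sml_monom_z (e : 'X_{1..n}) i :
  y_sml_monom k part e -> ~~ is_y k part i -> e i = 0%N.
Proof. by case/andP=> /forallP ez _ zi; apply/eqP/(implyP (ez i) zi). Qed.

Lemma mdeg_y_sml_monom (e : 'X_{1..n}) :
  (k <= r)%N -> y_sml_monom k part e -> mdeg e = k.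
Proof.
move=> kr ye; rewrite mdegE (partition_big part predT) //=.
rewrite (eq_bigr (fun j : 'I_r => if (j < k)%N then 1%N else 0%N)); last first.
  move=> j _; case: ifP => jk.
    by case/andP: ye => _ /forallP eb; apply/eqP/(implyP (eb j) jk).
  by rewrite big1 // => i /eqP pi; apply: y_sml_monom_z ye _; rewrite /is_y pi jk.
rewrite -big_mkcond /= -(big_ord_widen _ (fun _ => 1%N) kr).
by rewrite sum1_card card_ord.
Qed.

Lemma y_point_supp_point (e : 'X_{1..n}) :
  (k <= r)%N -> y_sml_monom k part e -> y_point k part (supp_point e).
Proof.
move=> kr ye; apply/andP; split.
  by apply/forallP=> i; apply/implyP=> zi; rewrite ffunE y_sml_monom_z // eqxx.
by rewrite -(mdeg_y_sml_monom kr ye) card_supp_point_le.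
Qed.

Definition sml_monom (m : 'X_{1..n}) : Prop :=
  forall j : 'I_r, (\sum_(i < n | part i == j) m i)%N = 1%N.

Section Derivative.

Variables (m e : 'X_{1..n}).
Hypotheses (m_sml : sml_monom m) (e_sml : y_sml_monom k part e).

Lemma sml_monom_agree i : (forall i', e i' <= m i')%N -> is_y k part i -> m i = e i.
Proof.
move=> le_em yi.
have [im pim mE] := block_sum1P (m_sml (part i)).
have [ie pie eE] := block_sum1P (y_sml_monom_block e_sml yi).
have ie_im : ie = im.
  by apply/eqP; have := le_em ie; rewrite eE // eqxx mE //; case: eqP.
by rewrite mE // eE // ie_im.
Qed.

Lemma sml_monom_escape i : (m i < e i)%N ->
  exists2 i', is_y k part i' & (m i' != 0%N) && (e i' == 0%N).
Proof.
move=> lt_me.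
have yi : is_y k part i by apply: contraTT lt_me => /(y_sml_monom_z e_sml) ->.
have [im pim mE] := block_sum1P (m_sml (part i)).
have [ie pie eE] := block_sum1P (y_sml_monom_block e_sml yi).
have [im_ie | ne] := eqVneq im ie.
  by move: lt_me; rewrite mE // eE // im_ie ltnn.
exists im; first by rewrite /is_y pim.
by rewrite mE // eE // eqxx (negbTE ne).
Qed.

Lemma mderivm_monomial_meval (R : comNzRingType) (v : 'I_n -> R) :
  (\prod_(i < n) m i ^_ e i)%:R * \prod_(i < n) v i ^+ (m - e)%MM i =
  \prod_(i < n) (if is_y k part i then (supp_point e i)%:R else v i) ^+ m i.
Proof.
case: (boolP [forall i, e i <= m i]%N) => [/forallP le_em | ].
  rewrite natr_prod -big_split /=; apply: eq_bigr => i _.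
  case: ifP => yi; last first.
    by rewrite mnmBE (y_sml_monom_z e_sml (negbT yi)) ffactn0 subn0 mul1r.
  rewrite mnmBE (sml_monom_agree le_em yi) subnn expr0 mulr1 ffunE.
  have [ie _ eE] := block_sum1P (y_sml_monom_block e_sml yi).
  by rewrite eE //; case: eqP.
(* The falling factorial vanishes at i, and the unique variable of m in the
   block of i lies outside supp e, so its factor on the right is 0. *)
rewrite negb_forall => /existsP [i]; rewrite -ltnNge => lt_me.
have [i' yi' /andP[mi' /eqP ei']] := sml_monom_escape lt_me.
rewrite (bigD1 i) //= ffact_small // mul0n mul0r.
by rewrite (bigD1 i') //= yi' ffunE ei' eqxx expr0n (negbTE mi') mul0r.
Qed.

End Derivative.

Lemma meval_mderivm_y_sml (F : fieldType) (P : {mpoly F[n]}) (e : 'X_{1..n})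
    (v : 'I_n -> F) :
  set_multilinear part P -> y_sml_monom k part e ->
  (mderivm e P).@[v] =
  P.@[fun i => if is_y k part i then (supp_point e i)%:R else v i].
Proof.
move=> P_sml e_sml; rewrite mderivmE raddf_sum /= mevalE.
apply: eq_big_seq => m mP.
by rewrite mevalZ mevalX -mulrA (mderivm_monomial_meval (P_sml m mP) e_sml).
Qed.

Lemma meval_subst_y (F : fieldType) (a : {ffun 'I_n -> bool}) (P : {mpoly F[n]})
    (v : 'I_n -> F) :
  (subst_y k part a P).@[v] = P.@[fun i => if is_y k part i then (a i)%:R else v i].
Proof.
rewrite comp_mpoly_meval; apply: meval_eq => i; rewrite tnth_mktuple.
by case: ifP; rewrite ?mevalC ?mevalXU.
Qed.

End Blocks.

Theorem corollary4p6 (F : fieldType) (n r k : nat) (part : 'I_n -> 'I_r)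
  (P : {mpoly F[n]}) :
  (k <= r)%N ->
  set_multilinear part P ->
  forall l : nat, (GammaPSPD k part l P <= GammaSED k part l P)%N.
Proof.
move=> kr P_sml l; apply/dimvS/sub_span => x /mapP [[m e] /=].
rewrite mem_filter => /andP[/andP[zm e_sml] _] ->.
apply/mapP; exists (m, supp_point (val e)).
  by rewrite mem_filter mem_enum andbT zm y_point_supp_point.
apply/ffunP => s; rewrite !ffunE !mevalM meval_subst_y.
by rewrite (meval_mderivm_y_sml _ P_sml e_sml).
Qed.
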